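(* Let $k$ be an odd positive integer. Then $$\sum_{n=1}^{k-1}\frac{\cos^2(\pi n/k)}{\sin^4(2\pi n/k)}=\frac{1}{720}\left(k^4+70k^2-71\right).$$ *)

From Stdlib Require Import Reals Lra Lia.
Open Scope R_scope.

Fixpoint sum_upto (m : nat) (f : nat -> R) : R :=
  match m with
  | O => 0
  | S m' => sum_upto m' f + f m'
  end.
Definition sum_1_to (N : nat) (f : nat -> R) : R :=
  sum_upto N (fun i => f (S i)).

(* For k = 2m+1, sin (k x) = cos^k x * tan x * S_k (tan^2 x) where S_k has the signed
   binomial coefficients (-1)^j C(k, 2j+1); S_k has degree m and vanishes at the m distinct
   points t_i = tan^2 (pi i / k), 1 <= i <= m, so Vieta's formulas give sum t_i = C(k,2),
   sum 1/t_i = C(k,3)/k and sum 1/t_i^2 = (C(k,3)/k)^2 - 2 C(k,5)/k.  The summand equals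
   (1/t^2 + 3/t + 3 + t)/16 at t = tan^2 (pi n / k), and it is invariant under n |-> k - n,
   so the sum over 1 <= n <= 2m is twice the sum over the t_i. *)

From Stdlib Require Import Reals Lra Lia.
Open Scope R_scope.

Definition cos2_sin4_double (x : R) : R := cos x ^ 2 / sin (2 * x) ^ 4.

Lemma cos2_sin4_double_pi_sub (x : R) :
  cos2_sin4_double (PI - x) = cos2_sin4_double x.
Proof.
unfold cos2_sin4_double.
replace (2 * (PI - x)) with (2 * PI - 2 * x) by ring.
rewrite Rtrigo_facts.cos_pi_minus, sin_minus, sin_2PI, cos_2PI.
unfold Rdiv; f_equal; [ring | f_equal; ring].
Qed.

Lemma cos2_sin4_double_tan (x : R) : cos x <> 0 -> sin x <> 0 ->
  let t := tan x ^ 2 in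
  cos2_sin4_double x = ((/ t) ^ 2 + 3 * / t + 3 + t) / 16.
Proof.
intros Hc Hs t; unfold cos2_sin4_double, t, tan.
rewrite sin_2a.
assert (Pythagoras : sin x ^ 2 + cos x ^ 2 = 1)
  by (rewrite <- (sin2_cos2 x); unfold Rsqr; ring).
transitivity ((sin x ^ 2 + cos x ^ 2) ^ 3 / (16 * sin x ^ 4 * cos x ^ 2)).
- rewrite Pythagoras; field; auto.
- field; auto.
Qed.

Lemma frac_pi_bounds (k i : nat) : (0 < i)%nat -> (2 * i < k)%nat ->
  0 < PI * INR i / INR k < PI / 2.
Proof.
intros Hi Hk.
assert (Ki : 0 < INR i) by (apply lt_0_INR; lia).
assert (Kk : 2 * INR i + 1 <= INR k).
{ replace (2 * INR i + 1) with (INR (2 * i + 1))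
    by (rewrite plus_INR, mult_INR; simpl; ring).
  apply le_INR; lia. }
assert (HPI := PI_RGT_0).
assert (E : INR k * (PI * INR i / INR k) = PI * INR i) by (field; lra).
split; [apply Rdiv_lt_0_compat; nra | nra].
Qed.

Lemma sin_nat_mul_frac_pi (k i : nat) : (0 < k)%nat ->
  sin (INR k * (PI * INR i / INR k)) = 0.
Proof.
intros Hk; assert (0 < INR k) by (apply lt_0_INR; lia).
replace (INR k * (PI * INR i / INR k)) with (IZR (Z.of_nat i) * PI).
- apply sin_eq_0_1; eauto.
- rewrite <- INR_IZR_INZ; field; lra.
Qed.

Lemma tan_frac_pi_lt (k i j : nat) : (0 < i)%nat -> (i < j)%nat -> (2 * j < k)%nat ->
  tan (PI * INR i / INR k) < tan (PI * INR j / INR k).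
Proof.
intros Hi Hij Hk.
destruct (frac_pi_bounds k i Hi ltac:(lia)) as [Hi0 Hi1].
destruct (frac_pi_bounds k j ltac:(lia) Hk) as [Hj0 Hj1].
assert (0 < INR k) by (apply lt_0_INR; lia).
apply tan_increasing; try lra.
unfold Rdiv; apply Rmult_lt_compat_r; [apply Rinv_0_lt_compat; lra |].
apply Rmult_lt_compat_l; [exact PI_RGT_0 | apply lt_INR; lia].
Qed.

Lemma cos2_sin4_double_frac_pi (k n : nat) :
  cos (PI * INR n / INR k) ^ 2 / sin (2 * PI * INR n / INR k) ^ 4 =
  cos2_sin4_double (PI * INR n / INR k).
Proof.
unfold cos2_sin4_double.
now replace (2 * PI * INR n / INR k) with (2 * (PI * INR n / INR k)) by (unfold Rdiv; ring).
Qed.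

Lemma cos2_sin4_double_frac_pi_sub (k n : nat) : (0 < k)%nat -> (n <= k)%nat ->
  cos2_sin4_double (PI * INR (k - n) / INR k) = cos2_sin4_double (PI * INR n / INR k).
Proof.
intros Hk Hn; assert (0 < INR k) by (apply lt_0_INR; lia).
rewrite <- cos2_sin4_double_pi_sub, minus_INR by exact Hn.
f_equal; field; lra.
Qed.

From mathcomp Require Import all_boot all_order all_algebra.
From mathcomp Require Import Rstruct ring zify.
Import Order.TTheory GRing.Theory Num.Theory.
Local Open Scope ring_scope.

Lemma IZR_Zpos_natr (p : positive) : IZR (Zpos p) = (nat_of_pos p)%:R.
Proof. by rewrite IZRposE INRE. Qed.

Lemma sum_1_toE (n : nat) (f : nat -> R) : sum_1_to n f = \sum_(1 <= i < n.+1) f i.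
Proof.
rewrite /sum_1_to big_add1 /=.
elim: n => [|n IH]; first by rewrite big_geq.
by rewrite big_nat_recr //= IH.
Qed.

Lemma big_nat_palindrome (V : nmodType) (m : nat) (F : nat -> V) :
  (forall i, (i <= m.*2.+1)%N -> F (m.*2.+1 - i)%N = F i) ->
  \sum_(1 <= i < m.*2.+1) F i = (\sum_(1 <= i < m.+1) F i) *+ 2.
Proof.
move=> F_sym; rewrite mulr2n (big_cat_nat _ (n := m.+1)) //=; last by lia.
congr (_ + _); rewrite (big_addn 1 _ m) [RHS]big_nat_rev.
have -> : (m.*2.+1 - m = m.+1)%N by lia.
apply: eq_big_nat => i i_range.
by rewrite -F_sym; [congr F | ]; lia.
Qed.

Section MultipleAnglePolynomials.
Variable K : comNzRingType.

Definition sin_mul_poly (n : nat) : {poly K} :=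
  \poly_(j < n) ((-1) ^+ j * ('C(n, j.*2.+1))%:R).
Definition cos_mul_poly (n : nat) : {poly K} :=
  \poly_(j < n.+1) ((-1) ^+ j * ('C(n, j.*2))%:R).

Lemma coef_sin_mul_poly n j :
  (sin_mul_poly n)`_j = (-1) ^+ j * ('C(n, j.*2.+1))%:R.
Proof.
rewrite coef_poly; case: ltnP => // le_n_j.
by rewrite bin_small ?mulr0 //; lia.
Qed.

Lemma coef_cos_mul_poly n j :
  (cos_mul_poly n)`_j = (-1) ^+ j * ('C(n, j.*2))%:R.
Proof.
rewrite coef_poly; case: ltnP => // lt_n_j.
by rewrite bin_small ?mulr0 //; lia.
Qed.

Lemma sin_mul_polyS n : sin_mul_poly n.+1 = sin_mul_poly n + cos_mul_poly n.
Proof.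
apply/polyP => j.
by rewrite coefD !coef_sin_mul_poly coef_cos_mul_poly binS natrD mulrDr.
Qed.

Lemma cos_mul_polyS n : cos_mul_poly n.+1 = cos_mul_poly n - 'X * sin_mul_poly n.
Proof.
apply/polyP => -[|j]; rewrite coefB coefXM !coef_cos_mul_poly /=.
  by rewrite !bin0 subr0.
by rewrite coef_sin_mul_poly doubleS binS natrD exprS; ring.
Qed.

Lemma size_sin_mul_poly_odd m : (size (sin_mul_poly m.*2.+1) <= m.+1)%N.
Proof.
by apply/leq_sizeP => j le_j; rewrite coef_sin_mul_poly bin_small ?mulr0 //; lia.
Qed.

End MultipleAnglePolynomials.

Lemma sin_cos_nat_mul_tan (n : nat) (x : R) : cos x != 0 ->
  sin (n%:R * x) = cos x ^+ n * tan x * (sin_mul_poly R n).[tan x ^+ 2] /\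
  cos (n%:R * x) = cos x ^+ n * (cos_mul_poly R n).[tan x ^+ 2].
Proof.
move=> cos_neq0.
have sinE : sin x = tan x * cos x by rewrite /tan RdivE mulfVK.
elim: n => [|n [IHsin IHcos]].
  rewrite RmultE mul0r sin_0 cos_0 /sin_mul_poly /cos_mul_poly !poly_def.
  by rewrite big_ord0 big_ord1 horner0 hornerZ hornerXn !expr0 bin0 !mulr1 mulr0.
rewrite RmultE mulrSr mulrDl mul1r sinD cosD -!RmultE IHsin IHcos.
rewrite sin_mul_polyS cos_mul_polyS !(hornerD, hornerN, hornerM, hornerX) sinE.
set s := (sin_mul_poly R n).[_]; set c := (cos_mul_poly R n).[_].
rewrite !RmultE exprS.
by split; ring.
Qed.

Section ProdXsubCLowCoef.
Variable F : fieldType.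
Implicit Types rs : seq F.
Local Notation P rs := (\prod_(z <- rs) ('X - z%:P)).

Lemma coef1_prod_XsubC rs : all (fun z => z != 0) rs ->
  (P rs)`_1 = - (P rs)`_0 * \sum_(z <- rs) z^-1.
Proof.
elim: rs => [|a rs IH] /=; first by rewrite !big_nil coef1 mulr0.
move=> /andP[a_neq0 /IH {}IH].
rewrite !big_cons mulrBl !coefB !coefXM !coefCM /= IH.
by field.
Qed.

Lemma coef2_prod_XsubC rs : all (fun z => z != 0) rs ->
  2 * (P rs)`_2 =
  (P rs)`_0 * ((\sum_(z <- rs) z^-1) ^+ 2 - \sum_(z <- rs) (z ^+ 2)^-1).
Proof.
elim: rs => [|a rs IH] /=; first by move=> _; rewrite !big_nil coef1 /=; ring.
move=> /andP[a_neq0 nz_rs]; have {}IH := IH nz_rs.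
rewrite !big_cons mulrBl !coefB !coefXM !coefCM /= mulrBr mulrCA IH.
rewrite coef1_prod_XsubC //.
by field.
Qed.

Lemma coefn_prod_XsubC rs : (P rs)`_(size rs) = 1.
Proof.
have := lead_coef_prod_XsubC rs predT id.
by rewrite lead_coefE (size_prod_XsubC rs id).
Qed.

End ProdXsubCLowCoef.

Section Vieta.
Context {F : fieldType} {p : {poly F}} {rs : seq F}.
Hypotheses (p_neq0 : p != 0)
  (p_split : p = lead_coef p *: \prod_(z <- rs) ('X - z%:P)).

Let lead_neq0 : lead_coef p != 0. Proof. by rewrite lead_coef_eq0. Qed.

Lemma vieta_sum_roots : size rs != 0%N ->
  \sum_(z <- rs) z = - p`_(size rs).-1 / p`_(size rs).
Proof.
move=> rs_neq0; rewrite p_split !coefZ coefn_prod_XsubC coefPn_prod_XsubC //.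
by field.
Qed.

Hypothesis roots_neq0 : all (fun z => z != 0) rs.

Let coef0_neq0 : (\prod_(z <- rs) ('X - z%:P))`_0 != 0.
Proof.
rewrite coef0_prod_XsubC mulf_neq0 ?signr_eq0 //.
by rewrite prodf_seq_neq0.
Qed.

Lemma vieta_sum_inv_roots : \sum_(z <- rs) z^-1 = - p`_1 / p`_0.
Proof.
rewrite p_split !coefZ coef1_prod_XsubC //.
by field; rewrite coef0_neq0 lead_neq0.
Qed.

Lemma vieta_sum_inv_sqr_roots :
  \sum_(z <- rs) (z ^+ 2)^-1 = (p`_1 / p`_0) ^+ 2 - 2 * p`_2 / p`_0.
Proof.
rewrite p_split !coefZ [2 * _]mulrCA coef2_prod_XsubC // coef1_prod_XsubC //.
by field; rewrite coef0_neq0 lead_neq0.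
Qed.

End Vieta.

Lemma natr_bin_le5 (F : numFieldType) (n : nat) :
  [/\ ('C(n, 1))%:R = n%:R :> F,
      ('C(n, 2))%:R = n%:R * (n%:R - 1) / 2 :> F,
      ('C(n, 3))%:R = n%:R * (n%:R - 1) * (n%:R - 2) / 6 :> F,
      ('C(n, 4))%:R = n%:R * (n%:R - 1) * (n%:R - 2) * (n%:R - 3) / 24 :> F &
      ('C(n, 5))%:R = n%:R * (n%:R - 1) * (n%:R - 2) * (n%:R - 3) * (n%:R - 4) / 120 :> F].
Proof.
elim: n => [|n [IH1 IH2 IH3 IH4 IH5]]; first by rewrite !bin0n /=; split; field.
by rewrite !binS !natrD bin0 IH1 IH2 IH3 IH4 IH5; split; field.
Qed.

Definition tan_sqr_roots (m : nat) : seq R :=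
  [seq tan (PI * INR i / INR m.*2.+1) ^+ 2 | i <- iota 1 m].

Lemma size_tan_sqr_roots m : size (tan_sqr_roots m) = m.
Proof. by rewrite size_map size_iota. Qed.

Lemma frac_pi_trig_gt0 {m i : nat} : (0 < i <= m)%N ->
  let x := PI * INR i / INR m.*2.+1 in [/\ 0 < sin x, 0 < cos x & 0 < tan x].
Proof.
move=> i_range x.
have [||x_gt0 x_lt] := frac_pi_bounds m.*2.+1 i; try lia.
have PI_gt0 := PI_RGT_0.
(* [lra] only knows the Stdlib operations, in which [x] and [0] are folded back. *)
rewrite /x -RdivE -RmultE; split; apply/RltP;
  [apply: sin_gt_0 | apply: cos_gt_0 | apply: tan_gt_0]; rewrite -?R0E; lra.
Qed.

Lemma tan_sqr_roots_gt0 m : all (fun z => 0 < z) (tan_sqr_roots m).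
Proof.
apply/allP => z /mapP[i]; rewrite mem_iota add1n ltnS => i_range ->.
by have [_ _ tan_gt0] := frac_pi_trig_gt0 i_range; rewrite exprn_gt0.
Qed.

Lemma tan_sqr_roots_sorted m : sorted <%R (tan_sqr_roots m).
Proof.
apply: (homo_sorted_in (P := fun i => (0 < i <= m)%N) _ _ (iota_ltn_sorted 1 m)).
  move=> i j i_range j_range lt_ij.
  have [_ _ tan_gt0] := frac_pi_trig_gt0 i_range.
  rewrite ltrXn2r ?ltW //; apply/RltP/tan_frac_pi_lt; lia.
by apply/allP => i; rewrite mem_iota; lia.
Qed.

Lemma sin_mul_poly_tan_sqr_roots m :
  all (root (sin_mul_poly R m.*2.+1)) (tan_sqr_roots m).
Proof.
apply/allP => z /mapP[i]; rewrite mem_iota add1n ltnS => i_range ->.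
have [_ cos_gt0 tan_gt0] := frac_pi_trig_gt0 i_range.
have [sinE _] := sin_cos_nat_mul_tan m.*2.+1 _ (lt0r_neq0 cos_gt0).
move: sinE; rewrite -INRE sin_nat_mul_frac_pi; last by lia.
set t := tan _ in tan_gt0 *; move=> /esym/eqP.
rewrite mulf_eq0 => /orP[|//].
by rewrite mulf_eq0 expf_eq0 (gt_eqF cos_gt0) (gt_eqF tan_gt0) andbF.
Qed.

Lemma sin_mul_poly_split m :
  let p := sin_mul_poly R m.*2.+1 in
  p != 0 /\ p = lead_coef p *: \prod_(z <- tan_sqr_roots m) ('X - z%:P).
Proof.
move=> p.
have roots_uniq : uniq_roots (tan_sqr_roots m).
  by rewrite uniq_rootsE lt_sorted_uniq // tan_sqr_roots_sorted.
have p_neq0 : p != 0.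
  apply: contraTneq (_ : p`_0 != 0) => [->|]; first by rewrite coef0 eqxx.
  by rewrite coef_sin_mul_poly bin1 mul1r pnatr_eq0.
split => //; apply: all_roots_prod_XsubC => //; last exact: sin_mul_poly_tan_sqr_roots.
apply/eqP; rewrite eqn_leq size_tan_sqr_roots size_sin_mul_poly_odd /=.
by rewrite -{1}(size_tan_sqr_roots m) max_ring_poly_roots // sin_mul_poly_tan_sqr_roots.
Qed.

Lemma tan_sqr_roots_neq0 m : all (fun z => z != 0) (tan_sqr_roots m).
Proof. by apply: sub_all (tan_sqr_roots_gt0 m) => z /lt0r_neq0. Qed.

Lemma sum_tan_sqr_roots m :
  \sum_(z <- tan_sqr_roots m) z = ('C(m.*2.+1, 2))%:R.
Proof.
case: m => [|m]; first by rewrite big_nil.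
have [p_neq0 p_split] := sin_mul_poly_split m.+1.
rewrite (vieta_sum_roots p_neq0 p_split) size_tan_sqr_roots //= !coef_sin_mul_poly binn.
have -> : (m.*2.+1 = m.+1.*2.+1 - 2)%N by lia.
by rewrite bin_sub // exprS; field; rewrite signr_eq0.
Qed.

Lemma sum_inv_tan_sqr_roots m :
  \sum_(z <- tan_sqr_roots m) z^-1 = ('C(m.*2.+1, 3))%:R / (m.*2.+1)%:R.
Proof.
have [p_neq0 p_split] := sin_mul_poly_split m.
rewrite (vieta_sum_inv_roots p_neq0 p_split (tan_sqr_roots_neq0 m)).
by rewrite !coef_sin_mul_poly bin1; field; rewrite addrC natr1 pnatr_eq0.
Qed.

Lemma sum_inv_sqr_tan_sqr_roots m :
  \sum_(z <- tan_sqr_roots m) (z ^+ 2)^-1 =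
  (('C(m.*2.+1, 3))%:R / (m.*2.+1)%:R) ^+ 2 - 2 * ('C(m.*2.+1, 5))%:R / (m.*2.+1)%:R.
Proof.
have [p_neq0 p_split] := sin_mul_poly_split m.
rewrite (vieta_sum_inv_sqr_roots p_neq0 p_split (tan_sqr_roots_neq0 m)).
by rewrite !coef_sin_mul_poly bin1; field; rewrite addrC natr1 pnatr_eq0.
Qed.

Lemma sum_cos2_sin4_double_half m :
  \sum_(1 <= i < m.+1) cos2_sin4_double (PI * INR i / INR m.*2.+1) =
  ((m.*2.+1)%:R ^+ 4 + 70 * (m.*2.+1)%:R ^+ 2 - 71) / 1440.
Proof.
rewrite /index_iota subn1 /=.
transitivity (\sum_(z <- tan_sqr_roots m) (((z ^+ 2)^-1 + 3 * z^-1 + 3 + z) / 16)).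
  rewrite big_map; apply: eq_big_seq => i; rewrite mem_iota add1n ltnS => i_range.
  have [/lt0r_neq0/eqP ? /lt0r_neq0/eqP ? _] := frac_pi_trig_gt0 i_range.
  rewrite cos2_sin4_double_tan //.
  by rewrite RdivE RinvE !RpowE !RplusE !RmultE !IZR_Zpos_natr /= exprVn.
rewrite -mulr_suml !big_split /= -!mulr_sumr.
rewrite big_const_seq count_predT iter_addr_0 size_tan_sqr_roots.
rewrite sum_tan_sqr_roots sum_inv_tan_sqr_roots sum_inv_sqr_tan_sqr_roots.
have [_ b2 b3 _ b5] := natr_bin_le5 R m.*2.+1.
have mE : m%:R = ((m.*2.+1)%:R - 1) / 2 :> R.
  by rewrite -addn1 natrD -muln2 natrM; field.
rewrite b2 b3 b5 -mulr_natr mE.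
by field; rewrite addrC natr1 pnatr_eq0.
Qed.

Local Close Scope ring_scope.

Theorem mainTheorem6 (k : nat) (hk : Nat.odd k = true) :
  sum_1_to (k - 1)%coq_nat
    (fun n => (cos (PI * INR n / INR k)) ^ 2 / (sin (2 * PI * INR n / INR k)) ^ 4)
  = / 720 * ((INR k) ^ 4 + 70 * (INR k) ^ 2 - 71).
Proof.
have [m ->] : exists m, k = m.*2.+1.
  by have [m km] := proj1 (Nat.odd_spec k) hk; exists m; lia.
have -> : (m.*2.+1 - 1)%coq_nat = m.*2 by lia.
rewrite sum_1_toE.
under eq_bigr => i _ do rewrite cos2_sin4_double_frac_pi.
rewrite big_nat_palindrome => [|i le_i]; last first.
  by apply: cos2_sin4_double_frac_pi_sub; lia.
rewrite sum_cos2_sin4_double_half.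
rewrite RinvE !RmultE RminusE RplusE !RpowE INRE !IZR_Zpos_natr /=.
by field.
Qed.
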